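(* For all $a, b \in \mathbb{N}$, $R_\mathrm{ord}(K_a, S_b^\mathrm{sc}) = 1 + (a-1)(b-1)$.
   Context: All graphs are finite, simple and undirected, and a graph of order $n$ has vertex set $\{0,1,\ldots,n-1\}$; $K_n$ is the complete graph on $\{0,\ldots,n-1\}$. A $2$-edge-coloring of $K_n$ assigns each edge a color in $\{1,2\}$. For a graph $H$ and such a coloring, an embedding of $H$ in color $j$ is an injective map $\varphi\colon V(H)\to V(K_n)$ such that for every edge $uv$ of $H$ the edge $\{\varphi(u),\varphi(v)\}$ has color $j$; it is increasing if $\varphi(0)<\cdots<\varphi(|H|-1)$. The ordered Ramsey number $R_\mathrm{ord}(H_1,H_2)$ is the smallest $n$ such that every $2$-edge-coloring of $K_n$ admits an increasing embedding of $H_1$ in color $1$ or an increasing embedding of $H_2$ in color $2$. The start-central star $S_n^\mathrm{sc}$ is the graph of order $n$ whose edges are exactly $\{0,v\}$ for $1\le v\le n-1$. *)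

From mathcomp Require Import all_boot.
Set Implicit Arguments. Unset Strict Implicit. Unset Printing Implicit Defensive.

Record graph := Graph {
  gorder : nat;
  gedge : rel 'I_gorder;
  gedge_sym : forall u v, gedge u v = gedge v u;
  gedge_irr : forall u, gedge u u = false }.

Definition Kn_edge (n : nat) : rel 'I_n := fun u v => u != v.
Lemma Kn_sym n (u v : 'I_n) : Kn_edge u v = Kn_edge v u.
Proof. by rewrite /Kn_edge eq_sym. Qed.
Lemma Kn_irr n (u : 'I_n) : Kn_edge u u = false.
Proof. by rewrite /Kn_edge eqxx. Qed.
Definition K_ (n : nat) : graph := Graph (@Kn_sym n) (@Kn_irr n).

Definition Ssc_edge (n : nat) : rel 'I_n :=
  fun u v => ((val u == 0) && (val v != 0)) || ((val v == 0) && (val u != 0)).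
Lemma Ssc_sym n (u v : 'I_n) : Ssc_edge u v = Ssc_edge v u.
Proof. by rewrite /Ssc_edge orbC. Qed.
Lemma Ssc_irr n (u : 'I_n) : Ssc_edge u u = false.
Proof. by rewrite /Ssc_edge; case: (val u == 0). Qed.
Definition S_sc (n : nat) : graph := Graph (@Ssc_sym n) (@Ssc_irr n).

(* A 2-edge-coloring of K_n: each edge {i,j} (i <> j) gets color c i j in {1,2};
   c is symmetric, so it is a function of the unordered edge. *)
Definition two_coloring (n : nat) (c : 'I_n -> 'I_n -> nat) : Prop :=
  (forall i j, c i j = c j i) /\ (forall i j, i != j -> c i j = 1 \/ c i j = 2).

Arguments two_coloring {n} c.

Definition incr_embedding (n : nat) (c : 'I_n -> 'I_n -> nat) (H : graph) (j : nat)
  (phi : 'I_(gorder H) -> 'I_n) : Prop :=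
  (forall u v : 'I_(gorder H), u < v -> phi u < phi v) /\
  (forall u v : 'I_(gorder H), @gedge H u v -> c (phi u) (phi v) = j).

Arguments incr_embedding {n} c H j phi.

Definition ord_ramsey_prop (H1 H2 : graph) (n : nat) : Prop :=
  forall c : 'I_n -> 'I_n -> nat, two_coloring c ->
    (exists phi, incr_embedding c H1 1 phi) \/ (exists phi, incr_embedding c H2 2 phi).

Definition is_R_ord (H1 H2 : graph) (N : nat) : Prop :=
  ord_ramsey_prop H1 H2 N /\ (forall n, n < N -> ~ ord_ramsey_prop H1 H2 n).

(* Upper bound: scan the vertices in increasing order.  The first vertex v
   either has b-1 later neighbours in colour 2, which together with v form a
   colour-2 start-central star, or at least 1 + (a-2)(b-1) later neighbours in
   colour 1, among which (inductively) a colour-1 K_(a-1) extends by v to a K_a.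
   Lower bound: cut the vertices into blocks of b-1 consecutive ones, colour
   edges inside a block 2 and the others 1.  A colour-1 clique meets each of
   the at most a-1 blocks at most once, while a colour-2 star with b vertices
   would have to fit into a single block. *)

From mathcomp Require Import all_boot.
From mathcomp Require Import zify.

Set Implicit Arguments.
Unset Strict Implicit.
Unset Printing Implicit Defensive.

Section GreedyDichotomy.

Variables (T : eqType) (r : rel T).

Lemma subseq_pairwise_or_star (a k : nat) (s : seq T) : a * k < size s ->
  (exists t, [/\ subseq t s, size t = a.+1 & pairwise r t]) \/
  (exists v w, [/\ subseq (v :: w) s, size w = k & all (predC (r v)) w]).
Proof.
elim: a s => [|a IH] [|v s] // s_large.
  by left; exists [:: v]; rewrite sub1seq mem_head.
set s1 := filter (r v) s; set s2 := filter (predC (r v)) s.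
have [k_le_s2|s2_lt_k] := leqP k (size s2).
  right; exists v, (take k s2); split; rewrite ?size_takel //=.
  - by rewrite eqxx (subseq_trans (take_subseq _ _)) ?filter_subseq.
  - by apply/allP => x /mem_take; rewrite mem_filter => /andP[].
have s1_large : a * k < size s1.
  have := count_predC (r v) s; rewrite -!size_filter -/s1 -/s2.
  by move: s_large s2_lt_k; rewrite /= mulSn; lia.
have s1_sub : subseq s1 s by exact: filter_subseq.
have [[t [t_sub t_size t_pw]]|[u [w [uw_sub w_size w_star]]]] := IH _ s1_large.
- left; exists (v :: t); rewrite /= eqxx t_size t_pw andbT.
  split=> //; first exact: subseq_trans s1_sub.
  by apply/allP => x /(mem_subseq t_sub); rewrite mem_filter => /andP[].
- right; exists u, w; split=> //.
  by apply: subseq_trans (subseq_trans s1_sub (subseq_cons s v)).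
Qed.

End GreedyDichotomy.

Section Embeddings.

Variables (n : nat) (c : 'I_n -> 'I_n -> nat).
Hypothesis c_col : two_coloring c.

Lemma two_coloring_not1 (x y : 'I_n) : x != y -> c x y != 1 -> c x y = 2.
Proof. by move=> /c_col.2 [->|]. Qed.

Lemma subseq_enum_sorted (t : seq 'I_n) :
  subseq t (enum 'I_n) -> sorted (relpre val ltn) t.
Proof.
move/subseq_sorted; apply; first by move=> y x z; exact: ltn_trans.
by rewrite -sorted_map val_enum_ord iota_ltn_sorted.
Qed.

Lemma sorted_nth_increasing (m : nat) (x0 : 'I_n) (t : seq 'I_n) :
  sorted (relpre val ltn) t -> size t = m ->
  forall u v : 'I_m, u < v -> nth x0 t u < nth x0 t v.
Proof.
move=> t_sorted t_size u v; apply: (sorted_ltn_nth _ _ t_sorted);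
  by rewrite ?inE ?t_size ?ltn_ord //; move=> y x z; exact: ltn_trans.
Qed.

Lemma clique_embedding (x0 : 'I_n) (t : seq 'I_n) :
  subseq t (enum 'I_n) -> pairwise (fun x y => c x y == 1) t ->
  exists phi, incr_embedding c (K_ (size t)) 1 phi.
Proof.
move=> /subseq_enum_sorted t_sorted /(pairwiseP x0) t_pw.
exists (fun u => nth x0 t u); split; first exact: sorted_nth_increasing.
have col1 (u v : 'I_(size t)) : u < v -> c (nth x0 t u) (nth x0 t v) = 1.
  by move=> uv; apply/eqP/t_pw; rewrite ?inE ?ltn_ord.
move=> u v /=; rewrite /Kn_edge neq_ltn => /orP[/col1 //|/col1].
by rewrite c_col.1.
Qed.

Lemma star_embedding (v : 'I_n) (w : seq 'I_n) :
  subseq (v :: w) (enum 'I_n) -> all (fun x => c v x != 1) w ->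
  exists phi, incr_embedding c (S_sc (size w).+1) 2 phi.
Proof.
move=> /subseq_enum_sorted vw_sorted /allP w_not1.
have /andP[/allP v_lt_w _] :
    all (relpre val ltn v) w && sorted (relpre val ltn) w.
  by rewrite -path_sortedE //; move=> y x z; exact: ltn_trans.
exists (fun u => nth v (v :: w) u); split; first exact: sorted_nth_increasing.
have col2 (j : 'I_(size w).+1) : j != 0 :> nat -> c v (nth v (v :: w) j) = 2.
  case: j => [[|j] //= j_lt _].
  have x_in : nth v w j \in w by exact: mem_nth j_lt.
  apply: two_coloring_not1; last exact: w_not1.
  by rewrite -val_eqE ltn_eqF //; exact: v_lt_w.
move=> u u' /=; rewrite /Ssc_edge => /orP[]/andP[/eqP u0 u'0].
- by rewrite u0 col2.
- by rewrite u0 c_col.1 col2.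
Qed.

End Embeddings.

Lemma ord_ramsey_clique_star_upper (a k : nat) :
  ord_ramsey_prop (K_ a.+1) (S_sc k.+1) (a * k).+1.
Proof.
move=> c c_col.
have enum_large : a * k < size (enum 'I_(a * k).+1) by rewrite size_enum_ord.
have [[t [t_sub t_size t_pw]]|[v [w [vw_sub w_size w_not1]]]] :=
  subseq_pairwise_or_star (fun x y => c x y == 1) enum_large.
- by left; move: (clique_embedding c_col ord0 t_sub t_pw); rewrite t_size.
- by right; move: (star_embedding c_col vw_sub w_not1); rewrite w_size.
Qed.

Lemma incr_embedding_inj n (c : 'I_n -> 'I_n -> nat) H j phi :
  incr_embedding c H j phi -> injective phi.
Proof.
move=> [incr _] u v phi_eq.
by case: (ltngtP u v) => [/incr|/incr|/val_inj //]; rewrite phi_eq ltnn.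
Qed.

Definition block_coloring (k n : nat) (i j : 'I_n) : nat :=
  if i %/ k == j %/ k then 2 else 1.

Lemma block_coloring_two_coloring k n : two_coloring (@block_coloring k n).
Proof.
split=> [i j|i j _]; rewrite /block_coloring; first by rewrite eq_sym.
by case: ifP; [right|left].
Qed.

Lemma block_coloring_no_clique a k n phi : 0 < k -> n <= a * k ->
  ~ incr_embedding (@block_coloring k n) (K_ a.+1) 1 phi.
Proof.
move=> k_gt0 n_le [_ col1].
have block_lt u : phi u %/ k < a.
  by rewrite ltn_divLR // (leq_trans (ltn_ord _) n_le).
have block_inj : injective (fun u => Ordinal (block_lt u)).
  move=> u v /(congr1 val) /= same_block; apply/eqP/negPn/negP => u_neq_v.
  by have := col1 u v u_neq_v; rewrite /block_coloring same_block eqxx.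
by have := leq_card _ block_inj; rewrite !card_ord ltnn.
Qed.

Lemma block_coloring_no_star k n phi : 0 < k ->
  ~ incr_embedding (@block_coloring k n) (S_sc k.+1) 2 phi.
Proof.
move=> k_gt0 phi_emb; have [_ col2] := phi_emb.
have same_block (u : 'I_k.+1) : phi u %/ k = phi ord0 %/ k.
  have [u0|u_gt0] := posnP u; first by congr (phi _ %/ k); exact: val_inj.
  have : Ssc_edge ord0 u by rewrite /Ssc_edge /= -lt0n u_gt0.
  by move/col2; rewrite /block_coloring; case: eqP.
have rem_inj : injective (fun u => Ordinal (ltn_pmod (phi u) k_gt0)).
  move=> u v /(congr1 val) /= same_rem; apply: (incr_embedding_inj phi_emb).
  apply: val_inj => /=.
  by rewrite (divn_eq (phi u) k) (divn_eq (phi v) k) same_rem !same_block.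
by have := leq_card _ rem_inj; rewrite !card_ord ltnn.
Qed.

Lemma ord_ramsey_clique_star_lower (a k n : nat) : n <= a * k ->
  ~ ord_ramsey_prop (K_ a.+1) (S_sc k.+1) n.
Proof.
move=> n_le ramsey; have [k0|k_gt0] := posnP k.
  move: n_le ramsey; rewrite k0 muln0 leqn0 => /eqP -> ramsey.
  have := ramsey _ (block_coloring_two_coloring 0 0).
  by case=> -[phi _]; case: (phi ord0).
case: (ramsey _ (block_coloring_two_coloring k n)) => -[phi].
  exact: block_coloring_no_clique.
exact: block_coloring_no_star.
Qed.

Theorem theorem4p24 (a b : nat) : 1 <= a -> 1 <= b ->
  is_R_ord (K_ a) (S_sc b) (1 + (a - 1) * (b - 1)).
Proof.
case: a => // a _; case: b => // k _; rewrite !subn1 /= add1n.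
split; first exact: ord_ramsey_clique_star_upper.
by move=> n; rewrite ltnS; exact: ord_ramsey_clique_star_lower.
Qed.
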